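(* Let $R$ be a power-serieswise Armendariz ring. Then the power series ring $R[[x]]$ is a generalized right quasi-Baer ring if and only if $R$ is a generalized right quasi-Baer ring.
   Context: All rings are associative with identity. For a nonempty subset $X$ of a ring $R$, $r_R(X)=\{a\in R : xa=0 \text{ for all } x\in X\}$, and for a positive integer $n$, $X^n$ denotes the set of all products $a_1\cdots a_n$ with $a_i\in X$. A ring $R$ is generalized right quasi-Baer if for every right ideal $I$ of $R$ there exist a positive integer $n$ (depending on $I$) and an idempotent $e\in R$ with $r_R(I^n)=eR$. A ring $R$ is power-serieswise Armendariz if whenever $f(x)=\sum_{i\ge0}a_ix^i$ and $g(x)=\sum_{j\ge0}b_jx^j$ in $R[[x]]$ satisfy $f(x)g(x)=0$, then $a_ib_j=0$ for all $i,j$. *)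

From mathcomp Require Import all_boot all_algebra.
Set Implicit Arguments. Unset Strict Implicit. Unset Printing Implicit Defensive.
Import GRing.Theory.
Local Open Scope ring_scope.

(* Ring-theoretic notions stated for an arbitrary carrier T equipped with
   explicit ring operations (add, opp, mul, zero).  They are instantiated
   below both with a mathcomp ring R and with the power series ring R[[x]]. *)
Section RingNotions.
Variables (T : Type) (add : T -> T -> T) (opp : T -> T) (mul : T -> T -> T)
          (zero : T).

Definition is_right_ideal (I : T -> Prop) : Prop :=
  I zero /\
  (forall a b, I a -> I b -> I (add a (opp b))) /\
  (forall a r, I a -> I (mul a r)).

(* setpow I n = I^(n.+1) = set of products a_1 * ... * a_(n+1), a_i in I. *)
Fixpoint setpow (I : T -> Prop) (n : nat) : T -> Prop :=
  match n with
  | 0 => I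
  | n'.+1 => fun c => exists a b, setpow I n' a /\ I b /\ c = mul a b
  end.

Definition r_ann (X : T -> Prop) : T -> Prop :=
  fun a => forall x, X x -> mul x a = zero.

Definition gen_right_quasi_Baer : Prop :=
  forall I : T -> Prop, is_right_ideal I ->
    exists (n : nat) (e : T), mul e e = e /\
      (forall a, r_ann (setpow I n) a <-> exists r, a = mul e r).
End RingNotions.

Section PowerSeries.
Variable R : pzRingType.
Definition pseries := nat -> R.
Definition ps_add (f g : pseries) : pseries := fun n => f n + g n.
Definition ps_opp (f : pseries) : pseries := fun n => - f n.
Definition ps_mul (f g : pseries) : pseries :=
  fun n => \sum_(i < n.+1) f i * g (n - i)%N.
Definition ps_zero : pseries := fun _ => 0.
Definition ps_one : pseries := fun n => if n == 0%N then 1 else 0.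

Definition ps_Armendariz : Prop :=
  forall f g : pseries, ps_mul f g = ps_zero -> forall i j, f i * g j = 0.
End PowerSeries.

Definition ring_gen_rqB (R : pzRingType) : Prop :=
  @gen_right_quasi_Baer R +%R -%R *%R 0.

Definition pseries_gen_rqB (R : pzRingType) : Prop :=
  @gen_right_quasi_Baer (pseries R) (@ps_add R) (@ps_opp R) (@ps_mul R)
    (@ps_zero R).

From mathcomp Require Import all_boot all_algebra.
From mathcomp Require Import zify.
From Stdlib Require Import FunctionalExtensionality.
Set Implicit Arguments. Unset Strict Implicit. Unset Printing Implicit Defensive.
Import GRing.Theory.
Local Open Scope ring_scope.

(** For a set [J] of power series let [C] be the set of all coefficients of
    members of [J].  Over a power-serieswise Armendariz ring, [g] right
    annihilates [J^n] exactly when every coefficient of [g] right annihilates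
    [C^n]; moreover a right ideal [I] of [R] is the coefficient set of the
    right ideal [I[[x]]].  Hence [r(J^n) = eR[[x]]] whenever [r(C^n) = eR],
    and conversely an idempotent generator [E] of [r(I[[x]]^n)] yields the
    idempotent [E_0] generating [r(I^n)]. *)

Section PowerSeriesArith.
Variable R : pzRingType.
Implicit Types (f g : pseries R) (c y : R).

Definition ps_monomial c (m : nat) : pseries R :=
  fun n => if n == m then c else 0.

Definition ps_scaler f y : pseries R := fun k => f k * y.

Lemma ps_mul_coef0 f g : ps_mul f g 0%N = f 0%N * g 0%N.
Proof. by rewrite /ps_mul big_ord1. Qed.

Lemma ps_mul_monomial f c m k : ps_mul f (ps_monomial c m) (k + m)%N = f k * c.
Proof.
have lt_k : (k < (k + m).+1)%N by lia.
rewrite /ps_mul (bigD1 (Ordinal lt_k)) //= /ps_monomial addKn eqxx.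
rewrite big1 ?addr0 // => i /eqP ne_ik.
case: eqP => [eq_m|_]; last by rewrite mulr0.
case: ne_ik; apply: val_inj => /=.
by move: (ltn_ord i) eq_m; case: i => j /=; lia.
Qed.

Lemma ps_mulr_const f c k : ps_mul f (ps_monomial c 0) k = f k * c.
Proof. by have := ps_mul_monomial f c 0 k; rewrite addn0. Qed.

Lemma ps_mull_const c g k : ps_mul (ps_monomial c 0) g k = c * g k.
Proof.
rewrite /ps_mul big_ord_recl /= /ps_monomial eqxx subn0 big1 ?addr0 // => i _.
by rewrite mul0r.
Qed.

Lemma ps_mul_scaler f g y k : ps_mul f g k * y = ps_mul f (ps_scaler g y) k.
Proof.
by rewrite /ps_mul mulr_suml; apply: eq_bigr => i _; rewrite /ps_scaler mulrA.
Qed.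

Definition ps_coefs (J : pseries R -> Prop) c : Prop :=
  exists f i, J f /\ c = f i.

End PowerSeriesArith.

Section Annihilators.
Variable R : pzRingType.
Hypothesis armR : ps_Armendariz R.
Variables (J : pseries R -> Prop) (C : R -> Prop).
Hypothesis C_coefs : forall c, C c <-> ps_coefs J c.

Local Notation ps_setpow := (setpow (@ps_mul R)).
Local Notation ps_r_ann := (r_ann (@ps_mul R) (ps_zero R)).
Local Notation setpowR := (setpow *%R).
Local Notation r_annR := (r_ann *%R 0).

Lemma r_ann_coefs_setpow n y :
  r_annR (ps_coefs (ps_setpow J n)) y <-> r_annR (setpowR C n) y.
Proof.
elim: n y => [|n IHn] y.
  by split=> ann_y c Cc; apply: ann_y; apply/C_coefs.
split=> ann_y.
- (* [c d y = 0] for [d] a coefficient of [b \in J]: the series [a * b y]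
     vanishes for every [a \in J^n], so Armendariz splits it coefficientwise. *)
  move=> _ [c [d [Cn_c [Cd ->]]]]; rewrite -mulrA.
  apply: (proj1 (IHn (d * y))) Cn_c => _ [a [j [Jn_a ->]]].
  move/C_coefs: Cd => [b [l [Jb ->]]].
  have ab_y0 : ps_mul a (ps_scaler b y) = ps_zero R.
    apply: functional_extensionality => i; rewrite -ps_mul_scaler.
    by apply: ann_y; exists (ps_mul a b), i; split => //; exists a, b.
  exact: armR ab_y0 j l.
- move=> _ [p [i [[a [b [Jn_a [Jb ->]]]] ->]]].
  rewrite ps_mul_scaler /ps_mul big1 // => j _; rewrite /ps_scaler.
  have ann_by : r_annR (setpowR C n) (b (i - j)%N * y).
    move=> c Cn_c; rewrite mulrA; apply: ann_y.
    exists c, (b (i - j)%N); do 2!split=> //.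
    by apply/C_coefs; exists b, (i - j)%N.
  by apply: (proj2 (IHn _) ann_by); exists a, j.
Qed.

Lemma ps_r_ann_setpow n g :
  ps_r_ann (ps_setpow J n) g <-> forall k, r_annR (setpowR C n) (g k).
Proof.
split=> ann_g.
  move=> k; apply/r_ann_coefs_setpow => _ [p [i [Jn_p ->]]].
  exact: armR (ann_g p Jn_p) i k.
move=> p Jn_p; apply: functional_extensionality => m.
rewrite /ps_mul big1 // => i _.
by apply: (proj2 (r_ann_coefs_setpow _ _) (ann_g _)); exists p, i.
Qed.

End Annihilators.

Section RightIdeals.
Variable R : pzRingType.

Lemma right_idealD (I : R -> Prop) :
  is_right_ideal +%R -%R *%R 0 I -> forall a b, I a -> I b -> I (a + b).
Proof.
move=> [I0 [IB _]] a b Ia Ib.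
by have := IB a (0 - b) Ia (IB 0 b I0 Ib); rewrite sub0r opprK.
Qed.

Definition series_over (I : R -> Prop) (f : pseries R) : Prop := forall i, I (f i).

Lemma series_over_right_ideal I : is_right_ideal +%R -%R *%R 0 I ->
  is_right_ideal (@ps_add R) (@ps_opp R) (@ps_mul R) (ps_zero R) (series_over I).
Proof.
move=> idI; have [I0 [IB IM]] := idI.
split; first by move.
split; first by move=> f g If Ig i; exact: IB.
move=> f r If m; apply: (big_ind I) => // [|i _]; first exact: right_idealD.
exact: IM.
Qed.

Lemma coefs_series_over (I : R -> Prop) :
  I 0 -> forall c, I c <-> ps_coefs (series_over I) c.
Proof.
move=> I0 c; split=> [Ic|[f [i [If ->]]] //].
by exists (ps_monomial c 0), 0%N; split=> // i; rewrite /ps_monomial; case: eqP.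
Qed.

Lemma coefs_right_ideal (J : pseries R -> Prop) :
  is_right_ideal (@ps_add R) (@ps_opp R) (@ps_mul R) (ps_zero R) J ->
  is_right_ideal +%R -%R *%R 0 (ps_coefs J).
Proof.
move=> [J0 [JB JM]]; split; first by exists (ps_zero R), 0%N.
split.
- (* shift [f] and [g] so that [f i] and [g j] both sit at degree [i + j] *)
  move=> _ _ [f [i [Jf ->]]] [g [j [Jg ->]]].
  exists (ps_add (ps_mul f (ps_monomial 1 j)) (ps_opp (ps_mul g (ps_monomial 1 i)))).
  exists (i + j)%N; split; first by apply: JB; apply: JM.
  by rewrite /ps_add /ps_opp ps_mul_monomial addnC ps_mul_monomial !mulr1.
- move=> _ r [f [i [Jf ->]]]; exists (ps_mul f (ps_monomial r 0)), i.
  by split; [exact: JM | rewrite ps_mulr_const].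
Qed.

End RightIdeals.

Section Transfer.
Variable R : pzRingType.
Hypothesis armR : ps_Armendariz R.

Lemma ring_gen_rqB_of_pseries : pseries_gen_rqB R -> ring_gen_rqB R.
Proof.
move=> rqB_ps I idI.
have C_coefs := coefs_series_over (proj1 idI).
have [n [E [idemE annE]]] := rqB_ps _ (series_over_right_ideal idI).
exists n, (E 0%N); split; first by rewrite -{3}idemE ps_mul_coef0.
have ann_E : forall k, r_ann *%R 0 (setpow *%R I n) (E k).
  apply/(ps_r_ann_setpow armR C_coefs)/annE.
  exists (ps_monomial 1 0); apply: functional_extensionality => k.
  by rewrite ps_mulr_const mulr1.
move=> a; split=> [ann_a | [r ->] c In_c]; last by rewrite mulrA ann_E // mul0r.
have [r ar] : exists r, ps_monomial a 0 = ps_mul E r.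
  apply/annE/(ps_r_ann_setpow armR C_coefs) => k c In_c.
  by rewrite /ps_monomial; case: eqP => _; [exact: ann_a | rewrite mulr0].
by exists (r 0%N); rewrite -ps_mul_coef0 -ar.
Qed.

Lemma pseries_gen_rqB_of_ring : ring_gen_rqB R -> pseries_gen_rqB R.
Proof.
move=> rqB_R J idJ.
have C_coefs : forall c, ps_coefs J c <-> ps_coefs J c by [].
have [n [e [idem_e anne]]] := rqB_R _ (coefs_right_ideal idJ).
exists n, (ps_monomial e 0); split.
  apply: functional_extensionality => k; rewrite ps_mull_const /ps_monomial.
  by case: eqP; rewrite ?idem_e ?mulr0.
move=> g; rewrite (ps_r_ann_setpow armR C_coefs); split=> [ann_g | [r ->] k].
  exists g; apply: functional_extensionality => k; rewrite ps_mull_const.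
  by have [r ->] := (anne (g k)).1 (ann_g k); rewrite mulrA idem_e.
by rewrite ps_mull_const; apply/anne; exists (r k).
Qed.

End Transfer.

Theorem corollary3p9 (R : pzRingType) :
  ps_Armendariz R -> (pseries_gen_rqB R <-> ring_gen_rqB R).
Proof.
move=> armR; split; [exact: ring_gen_rqB_of_pseries | exact: pseries_gen_rqB_of_ring].
Qed.
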